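(* Let $\bar{\mathcal S}=\{f:\exists\,h,z\text{ with }((f,h),z)\in\mathcal S\}$ and $\bar{\mathcal Q}=\{f:\exists\,w\text{ with }(f,w)\in\mathcal Q\}$. Then $\bar{\mathcal S}=\bar{\mathcal Q}$; consequently, minimizing any linear function $\Lambda f^T$ over $\mathcal S$ is equivalent to minimizing it over $\mathcal Q$.
   Context: Let $R$ be a finite ring with $q$ elements, $R^-=R\setminus\{0\}$, $\mathcal H$ an $m\times n$ matrix over $R$, $\mathcal I=\{1,\dots,n\}$, $\mathcal J=\{1,\dots,m\}$. For any $r\times N$ matrix $\mathcal A$ over $R$ with rows indexed by $\rho$, let $\mathcal C_\rho(\mathcal A)=\{g\in R^{\mathrm{supp}(\mathcal A_\rho)}:\sum_ig_i\mathcal A_{\rho,i}=0\}$ and let $\mathcal Q(\mathcal A)$ be the set of $(F,W)$, $F=(F_i^{(\alpha)})_{i\le N,\alpha\in R^-}$ real, $W=(W_{\rho,g})_{\rho,g\in\mathcal C_\rho(\mathcal A)}$ real, with $W_{\rho,g}\ge0$, $\sum_gW_{\rho,g}=1$ for each $\rho$, and $F_i^{(\alpha)}=\sum_{g\in\mathcal C_\rho(\mathcal A),g_i=\alpha}W_{\rho,g}$ for all $\rho$, $i\in\mathrm{supp}(\mathcal A_\rho)$, $\alpha\in R^-$. Let $\mathcal Q=\mathcal Q(\mathcal H)$, with points written $(f,w)$, $f\in\mathbb R^{(q-1)n}$. For each $j\in\mathcal J$ let $\mathcal I_j=\{i:\mathcal H_{j,i}\ne0\}=\{i_1,\dots,i_{d_j}\}$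 in a fixed order, with $d_j\ge4$, and introduce new variables $\chi^j_1,\dots,\chi^j_{d_j-3}$. Let $\mathcal F$ be the $\big(\sum_j(d_j-2)\big)\times\big(n+\sum_j(d_j-3)\big)$ matrix over $R$, acting on vectors $(c\mid\chi)$ with $c\in R^n$ and $\chi=(\chi^j)_{j\in\mathcal J}$, whose rows express, for every $j\in\mathcal J$, the equations $c_{i_1}\mathcal H_{j,i_1}+c_{i_2}\mathcal H_{j,i_2}+\chi^j_1=0$; $-\chi^j_\ell+c_{i_{\ell+2}}\mathcal H_{j,i_{\ell+2}}+\chi^j_{\ell+1}=0$ for $\ell=1,\dots,d_j-4$; $-\chi^j_{d_j-3}+c_{i_{d_j-1}}\mathcal H_{j,i_{d_j-1}}+c_{i_{d_j}}\mathcal H_{j,i_{d_j}}=0$. Let $\mathcal S=\mathcal Q(\mathcal F)$, with points written $((f,h),z)$ where $f\in\mathbb R^{(q-1)n}$ collects the $F$-coordinates for the $c$-positions and $h$ those for the $\chi$-positions. *)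

From HB Require Import structures.
From mathcomp Require Import all_boot all_order all_algebra.
From mathcomp Require Import reals.
Set Implicit Arguments. Unset Strict Implicit. Unset Printing Implicit Defensive.
Import Order.TTheory GRing.Theory Num.Theory.
Local Open Scope ring_scope.

Definition Rm (R : finNzRingType) := {x : R | x != 0}.

Section Polytope.
Variables (R : finNzRingType) (K : realType).
Variables (rT cT : finType) (A : rT -> cT -> R).

(* C_rho(A): g in R^{supp(A_rho)}, encoded as a function on all columns that
   vanishes outside supp(A_rho), with sum_i g_i A_{rho,i} = 0. *)
Definition Cset (rho : rT) (g : {ffun cT -> R}) : bool :=
  [forall i, (A rho i == 0) ==> (g i == 0)] && (\sum_i g i * A rho i == 0).

(* (F, W) in Q(A).  W is only meaningful on C_rho(A); it is set to 0 elsewhere. *)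
Definition inQ (F : cT -> Rm R -> K) (W : rT -> {ffun cT -> R} -> K) : Prop :=
  [/\ (forall rho g, ~~ Cset rho g -> W rho g = 0),
      (forall rho g, Cset rho g -> 0 <= W rho g),
      (forall rho, \sum_(g | Cset rho g) W rho g = 1) &
      (forall rho i (a : Rm R), A rho i != 0 ->
          F i a = \sum_(g | Cset rho g && (g i == val a)) W rho g)].
End Polytope.

Section Splitting.
Variables (R : finNzRingType) (m n : nat) (H : 'M[R]_(m, n)).
(* s j = [:: i_1; ...; i_{d_j}] is the fixed ordering of I_j *)
Variable (s : 'I_m -> seq 'I_n).

Definition dj (j : 'I_m) : nat := size (s j).

(* rows of calF: for each j, d_j - 2 equations (0-based index l) *)
Definition FrowT := {j : 'I_m & 'I_(dj j - 2)}.
(* columns of calF: the c-positions 'I_n and the chi^j_k (0-based k < d_j - 3) *)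
Definition FcolT := ('I_n + {j : 'I_m & 'I_(dj j - 3)})%type.

(* 0-based equation index in which the c at 0-based position p of I_j occurs:
   positions 0,1 -> equation 0; position p (2 <= p <= d-3) -> equation p-1;
   positions d-2, d-1 -> equation d-3. *)
Definition eq_of_pos (d p : nat) : nat :=
  if (p <= 1)%N then 0%N else if (d - 2 <= p)%N then (d - 3)%N else p.-1.

Definition calF (r : FrowT) (c : FcolT) : R :=
  let: existT j l := r in
  match c with
  | inl i => if (i \in s j) && (eq_of_pos (dj j) (index i (s j)) == l)
             then H j i else 0
  | inr (existT j' k) =>
      if j' == j then
        (if (k : nat) == (l : nat) then 1
         else if (k.+1 == l)%N then -1 else 0)
      else 0
  end.
End Splitting.

From HB Require Import structures.
From mathcomp Require Import all_boot all_order all_algebra.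
From mathcomp Require Import reals zify ring.
Import Order.TTheory GRing.Theory Num.Theory.
Local Open Scope ring_scope.
Set Implicit Arguments. Unset Strict Implicit. Unset Printing Implicit Defensive.

(* A point (f, w) of Q gives a point of S: push each local distribution w_j forward along
   g |-> (g, chi), where chi^j_k is minus the partial sum of the g_i H_{j,i} over the first
   k + 2 positions of I_j; every split equation is then satisfied.
   Conversely, the local distributions z_{j,0}, ..., z_{j,d_j-3} of the split equations of
   check j form a chain in which consecutive equations share exactly one variable chi^j_l,
   whose marginal they agree on.  Gluing them as a Markov chain (draw equation l + 1 from
   its distribution conditioned on the shared value of chi^j_l) gives a distribution on
   local codewords of check j with all the prescribed marginals. *)

Lemma sum_ord_if_eq (V : nmodType) N (k0 : 'I_N) (l : nat) (F : 'I_N -> V) :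
  \sum_(k : 'I_N) (if val k == l then F k else 0) =
  if (l < N)%N then F (insubd k0 l) else 0.
Proof.
case: ifPn => [lN|lN]; last first.
  by rewrite big1 // => k _; case: eqP => // kl; rewrite -kl ltn_ord in lN.
rewrite (bigD1 (Ordinal lN)) //= eqxx big1 ?addr0.
  by congr F; apply: val_inj; rewrite /= val_insubd lN.
by move=> k /eqP kl; case: eqP => // /= kl'; case: kl; apply: val_inj.
Qed.

Lemma if_sumr (V : nmodType) (I : Type) (r : seq I) (P : pred I) (F : I -> V) b :
  (if b then \sum_(i <- r | P i) F i else 0) = \sum_(i <- r | P i) (if b then F i else 0).
Proof. by case: b; rewrite ?big1_eq. Qed.

(* The coefficient of [g_i H_{j,i}] in equation [l] evaluated at [lift g]. *)
Lemma eq_of_pos_telescope (V : zmodType) (d p l : nat) (x : V) :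
  (4 <= d)%N -> (p < d)%N -> (l < d - 2)%N ->
  (if eq_of_pos d p == l then x else 0) +
  ((if (l < d - 3)%N then - (if (p < l.+2)%N then x else 0) else 0) -
   (if (0 < l)%N then - (if (p < l.-1.+2)%N then x else 0) else 0)) =
  (if (l == d - 3)%N then x else 0).
Proof.
move=> d4 pd ld; rewrite /eq_of_pos; case: (p <= 1)%N / idP => ?; [|case: (d - 2 <= p)%N / idP => ?] => /=;
  by repeat (case: ifP => ?); rewrite ?(addr0, add0r, subr0, sub0r, opprK, oppr0, subrr, addNr) //; lia.
Qed.

Lemma Cset_supp (R : finNzRingType) (rT cT : finType) (A : rT -> cT -> R) rho g i :
  Cset A rho g -> A rho i = 0 -> g i = 0.
Proof. by case/andP => /forallP /(_ i) /implyP A0 _ /eqP /A0 /eqP. Qed.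

Section Sums.
Variables (K : numDomainType) (T : finType).
Implicit Types (P Q : pred T) (G : T -> K).

Lemma ler_sum_term P G x :
  P x -> (forall y, P y -> 0 <= G y) -> G x <= \sum_(y | P y) G y.
Proof.
move=> Px G0; rewrite (bigD1 x) //= lerDl.
by apply: sumr_ge0 => y /andP[Py _]; exact: G0.
Qed.

Lemma big_cond_supp P G :
  (forall x, ~~ P x -> G x = 0) -> \sum_(x | P x) G x = \sum_x G x.
Proof.
by move=> G0; rewrite big_mkcond; apply: eq_bigr => x _; case: ifPn => // /G0.
Qed.

Lemma eq_bigl_supp P Q G :
  (forall x, G x != 0 -> P x = Q x) -> \sum_(x | P x) G x = \sum_(x | Q x) G x.
Proof.
move=> PQ; rewrite big_mkcond [RHS]big_mkcond; apply: eq_bigr => x _.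
by case: (eqVneq (G x) 0) => [->|/PQ ->]; rewrite ?if_same.
Qed.

Lemma big_if_eq P G a :
  \sum_(x | P x) (if x == a then G x else 0) = if P a then G a else 0.
Proof.
rewrite -big_mkcondr (eq_bigl (fun x => P a && (x == a))) => [|x].
  by case: ifP => _; rewrite ?big_pred1_eq ?big_pred0.
by case: eqP => [->|]; rewrite ?andbF ?andbT.
Qed.

End Sums.

Section Splitting.
Variables (R : finNzRingType) (K : realType) (m n : nat) (H : 'M[R]_(m, n)) (s : 'I_m -> seq 'I_n).
Hypothesis s_supp : forall j i, (i \in s j) = (H j i != 0).
Hypothesis d_ge4 : forall j, (4 <= size (s j))%N.

Local Notation d j := (dj s j).
Local Notation calF := (@calF R m n H s).

Local Notation Hrow := (fun j i => H j i).

Let d_ge4' j : (4 <= d j)%N. Proof. exact: d_ge4. Qed.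
Let d2_gt0 j : (0 < d j - 2)%N. Proof. by have := d_ge4' j; lia. Qed.
Let d3_gt0 j : (0 < d j - 3)%N. Proof. by have := d_ge4' j; lia. Qed.

(* Indices are natural numbers; out-of-range ones are clamped by [insubd] and never used. *)
Definition frow j (l : nat) : FrowT s := existT _ j (insubd (Ordinal (d2_gt0 j)) l).
Definition fchi j (k : nat) : FcolT s :=
  inr (existT _ j (insubd (Ordinal (d3_gt0 j)) k)).
Definition pos j i := index i (s j).
Definition eqn_of j i := eq_of_pos (d j) (pos j i).

Lemma frow_ord j (l : 'I_(d j - 2)) : frow j l = existT _ j l.
Proof. by rewrite /frow valKd. Qed.

Lemma fchi_ord j (k : 'I_(d j - 3)) : fchi j k = inr (existT _ j k).
Proof. by rewrite /fchi valKd. Qed.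

Lemma pos_lt j i : i \in s j -> (pos j i < d j)%N.
Proof. by rewrite /pos /dj index_mem. Qed.

Lemma eqn_of_lt j i : i \in s j -> (eqn_of j i < d j - 2)%N.
Proof.
move=> /pos_lt; have := d_ge4 j; rewrite /eqn_of /eq_of_pos /dj.
by case: ifP => ?; [lia | case: ifP => ?; lia].
Qed.

Lemma eqn_of_le j i k : i \in s j -> (pos j i < k.+2)%N -> (k < d j - 3)%N ->
  (eqn_of j i <= k)%N.
Proof.
move=> /pos_lt; rewrite /eqn_of /eq_of_pos.
by case: ifP => // ?; case: ifP => ? *; lia.
Qed.

Section Row.
Variables (j : 'I_m) (l : nat).
Hypothesis l_lt : (l < d j - 2)%N.

Lemma calF_inl i :
  calF (frow j l) (inl i) = if (i \in s j) && (eqn_of j i == l) then H j i else 0.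
Proof. by rewrite /calF /= val_insubd l_lt. Qed.

Lemma calF_inr j' (k : 'I_(d j' - 3)) :
  calF (frow j l) (inr (existT _ j' k)) =
  if j' == j then (if val k == l then 1 else if (k.+1 == l)%N then -1 else 0) else 0.
Proof. by rewrite /calF /= val_insubd l_lt. Qed.

Lemma calF_fchi k : (k < d j - 3)%N ->
  calF (frow j l) (fchi j k) = if k == l then 1 else if (k.+1 == l)%N then -1 else 0.
Proof. by move=> kd; rewrite /fchi calF_inr eqxx !val_insubd kd. Qed.

Lemma calF_inl_neq0 i : calF (frow j l) (inl i) != 0 = (i \in s j) && (eqn_of j i == l).
Proof. by rewrite calF_inl; case: ifP => [/andP[+ _]|]; rewrite ?s_supp ?eqxx. Qed.

Lemma calF_fchi_neq0 k : (k < d j - 3)%N -> (k == l) || (k.+1 == l)%N ->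
  calF (frow j l) (fchi j k) != 0.
Proof.
move=> kd /orP[] /eqP kl; rewrite calF_fchi //; first by rewrite kl eqxx oner_neq0.
by rewrite -kl ifN ?eqxx ?oppr_eq0 ?oner_neq0 //; lia.
Qed.

Lemma calF_inr_neq0 p : calF (frow j l) (inr p) != 0 ->
  exists k, [/\ (k < d j - 3)%N, inr p = fchi j k & (k == l) || (k.+1 == l)%N].
Proof.
case: p => j' k; rewrite calF_inr; case: (j' =P j) => [jj|_]; last by rewrite eqxx.
subst j'.
move=> nz; exists (val k); rewrite fchi_ord ltn_ord; split=> //.
by move: nz; case: ifP => // _; case: ifP; rewrite ?eqxx.
Qed.

Lemma sum_calF_row (y : {ffun FcolT s -> R}) :
  \sum_c y c * calF (frow j l) c =
  \sum_(i | (i \in s j) && (eqn_of j i == l)) y (inl i) * H j i +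
  ((if (l < d j - 3)%N then y (fchi j l) else 0) -
   (if (0 < l)%N then y (fchi j l.-1) else 0)).
Proof.
rewrite big_sumType; congr (_ + _).
  rewrite [RHS]big_mkcond; apply: eq_bigr => i _; rewrite calF_inl.
  by case: ifP; rewrite ?mulr0.
rewrite (eq_bigr (fun p => y (inr (existT _ (tag p) (tagged p))) *
  calF (frow j l) (inr (existT _ (tag p) (tagged p))))); last by case.
rewrite -(sig_big_dep xpredT (fun _ _ => true)
  (fun j' (k : 'I_(d j' - 3)) => y (inr (existT _ j' k)) * calF (frow j l) (inr (existT _ j' k)))).
rewrite (bigD1 j) // [X in _ + X = _]big1 ?addr0 => [|j' j'j]; last first.
  by apply: big1 => k _; rewrite calF_inr (negbTE j'j) mulr0.
rewrite (eq_bigr (fun k : 'I_(d j - 3) =>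
    (if val k == l then y (inr (existT _ j k)) else 0) -
    (if val k == l.-1 then (if (0 < l)%N then y (inr (existT _ j k)) else 0) else 0))).
  rewrite sumrB !(sum_ord_if_eq (Ordinal (d3_gt0 j))).
  by congr (_ - _); case: ifP => l0; case: ifP => // ?; lia.
move=> k _; rewrite calF_inr eqxx.
case: (val k =P l) => [kl|kl].
  rewrite mulr1; case: eqP => [?|_]; last by rewrite subr0.
  by case: ifP => ?; [lia | rewrite subr0].
case: (k.+1 =P l) => [<-|k1l]; first by rewrite mulrN1 eqxx sub0r.
rewrite mulr0 sub0r; case: eqP => [kl1|_]; last by rewrite oppr0.
by case: ifP => l0; [move: kl1 k1l l0 => /=; lia | rewrite oppr0].
Qed.

End Row.

Definition chi_of j k (g : {ffun 'I_n -> R}) : R :=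
  - \sum_(i | (i \in s j) && (pos j i < k.+2)%N) g i * H j i.

Definition lift (g : {ffun 'I_n -> R}) : {ffun FcolT s -> R} :=
  [ffun c : FcolT s => match c with inl i => g i | inr p => chi_of (tag p) (tagged p) g end].

Lemma lift_inl g i : lift g (inl i) = g i. Proof. by rewrite ffunE. Qed.

Lemma lift_fchi g j k : (k < d j - 3)%N -> lift g (fchi j k) = chi_of j k g.
Proof. by move=> kd; rewrite ffunE /= val_insubd kd. Qed.

Lemma sum_calF_lift j l g : (l < d j - 2)%N ->
  \sum_c lift g c * calF (frow j l) c =
  if (l == d j - 3)%N then \sum_(i | i \in s j) g i * H j i else 0.
Proof.
move=> lt; rewrite sum_calF_row //.
have lift_chi k (b : bool) : (b -> k < d j - 3)%N ->
    (if b then lift g (fchi j k) else 0) = if b then chi_of j k g else 0.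
  by case: b => // /(_ isT) kd; rewrite lift_fchi.
rewrite lift_chi // lift_chi => [|l0]; last by lia.
rewrite /chi_of !big_mkcondr -!sumrN !if_sumr -sumrB -big_split /=.
apply: eq_bigr => i iS; rewrite lift_inl.
by apply: eq_of_pos_telescope; [exact: d_ge4 | exact: pos_lt | exact: lt].
Qed.

Lemma sumr_supp j g : \sum_i g i * H j i = \sum_(i in s j) g i * H j i.
Proof.
rewrite [RHS]big_mkcond; apply: eq_bigr => i _.
by case: ifPn => //; rewrite s_supp negbK => /eqP ->; rewrite mulr0.
Qed.

Definition restrict rho (y : {ffun FcolT s -> R}) : {ffun FcolT s -> R} :=
  [ffun c => if calF rho c == 0 then 0 else y c].

Definition local j l g := restrict (frow j l) (lift g).

Lemma Cset_restrict rho y : Cset calF rho (restrict rho y) = (\sum_c y c * calF rho c == 0).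
Proof.
have -> : \sum_c y c * calF rho c = \sum_c restrict rho y c * calF rho c.
  by apply: eq_bigr => c _; rewrite ffunE; case: eqP => [->|]; rewrite ?mulr0 ?mul0r.
rewrite /Cset [X in X && _](_ : _ = true) //.
by apply/forallP => c; apply/implyP => /eqP F0; rewrite ffunE F0 eqxx.
Qed.

Lemma Cset_local j l g : (l < d j - 2)%N ->
  Cset calF (frow j l) (local j l g) = (l == d j - 3)%N ==> (\sum_i g i * H j i == 0).
Proof. by move=> lt; rewrite Cset_restrict sum_calF_lift // sumr_supp; case: ifP; rewrite ?eqxx. Qed.

Lemma Cset_local_inner j l g : (l < d j - 3)%N -> Cset calF (frow j l) (local j l g).
Proof. by move=> ld; rewrite Cset_local ?(ltn_eqF ld) //; lia. Qed.

Lemma Cset_local_codeword j l g : (l < d j - 2)%N -> Cset Hrow j g ->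
  Cset calF (frow j l) (local j l g).
Proof. by move=> lt /andP[_ gH]; rewrite Cset_local // gH implybT. Qed.

Lemma local_supp j l g c : calF (frow j l) c != 0 -> local j l g c = lift g c.
Proof. by move=> nz; rewrite ffunE (negbTE nz). Qed.

Lemma local_inl j l g i : (l < d j - 2)%N -> i \in s j -> eqn_of j i == l ->
  local j l g (inl i) = g i.
Proof. by move=> lt iS il; rewrite local_supp ?lift_inl // calF_inl_neq0 // iS. Qed.

Lemma local_fchi j l k g : (l < d j - 2)%N -> (k < d j - 3)%N ->
  (k == l) || (k.+1 == l)%N -> local j l g (fchi j k) = chi_of j k g.
Proof. by move=> lt kd kl; rewrite local_supp ?lift_fchi // calF_fchi_neq0. Qed.

Lemma inQ_split f w : inQ Hrow f w ->
  exists (h : {j : 'I_m & 'I_(d j - 3)} -> Rm R -> K) z,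
    inQ calF (fun c => match c with inl i => f i | inr k => h k end) z.
Proof.
case=> w0 w_ge0 w_sum w_marg.
exists (fun (p : {j : 'I_m & 'I_(d j - 3)}) (a : Rm R) =>
  \sum_(g | Cset Hrow (tag p) g && (chi_of (tag p) (tagged p) g == val a))
                    w (tag p) g).
exists (fun (rho : FrowT s) y =>
  \sum_(g | Cset Hrow (tag rho) g && (local (tag rho) (tagged rho) g == y))
                    w (tag rho) g).
have Cset_local_w j (l : 'I_(d j - 2)) g : Cset Hrow j g -> Cset calF (frow j l) (local j l g).
  by move=> Cg; rewrite Cset_local_codeword.
split.
- case=> j l y /=; rewrite -frow_ord => Cy; apply: big1 => g /andP[Cg /eqP gy].
  by move: Cy; rewrite -gy Cset_local_w.
- by case=> j l y /= _; apply: sumr_ge0 => g /andP[Cg _]; exact: w_ge0.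
- case=> j l /=; rewrite -frow_ord -(partition_big _ _ (Cset_local_w j l)).
  exact: w_sum.
case=> j l c a c_supp /=; rewrite -frow_ord in c_supp *.
transitivity (\sum_(g | Cset Hrow j g && (local j l g c == val a)) w j g); last first.
  rewrite (partition_big (local j l) (fun y => Cset calF (frow j l) y && (y c == val a))) /=;
    last by move=> g /andP[Cg ->]; rewrite Cset_local_w.
  apply: eq_bigr => y /andP[_ /eqP ya]; apply: eq_bigl => g.
  by case: (local j l g =P y) => [->|]; rewrite ?ya ?eqxx ?andbT ?andbF.
rewrite (eq_bigl (fun g => Cset Hrow j g && (lift g c == val a))) => [|g];
  last by rewrite (local_supp _ c_supp).
case: c c_supp => [i|p] c_supp.
  have /andP[iS _] : (i \in s j) && (eqn_of j i == l) by rewrite -calF_inl_neq0.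
  rewrite (w_marg j i a) -?s_supp //.
  by apply: eq_bigl => g; rewrite lift_inl.
have [k [kd pk _]] := calF_inr_neq0 (ltn_ord l) c_supp.
rewrite pk (eq_bigl (fun g => Cset Hrow j g && (chi_of j k g == val a))) => [|g];
  last by rewrite lift_fchi.
by case: pk => ->; rewrite /= val_insubd kd.
Qed.

Definition prefix j t (g : {ffun 'I_n -> R}) : {ffun 'I_n -> R} :=
  [ffun i => if (i \in s j) && (eqn_of j i < t)%N then g i else 0].

Lemma prefix0 j g : prefix j 0 g = 0.
Proof. by apply/ffunP => i; rewrite !ffunE andbF. Qed.

Lemma prefixK j t1 t2 g : (t1 <= t2)%N -> prefix j t1 (prefix j t2 g) = prefix j t1 g.
Proof.
move=> le12; apply/ffunP => i; rewrite !ffunE; case: (i \in s j) => //=.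
by case: ifP => // it1; rewrite ifT //; lia.
Qed.

Lemma chi_of_prefix j k t g : (k < t)%N -> (k < d j - 3)%N ->
  chi_of j k (prefix j t g) = chi_of j k g.
Proof.
move=> kt kd; congr (- _); apply: eq_bigr => i /andP[iS ik].
by rewrite ffunE iS ifT //; have := eqn_of_le iS ik kd; lia.
Qed.

Lemma local_prefix j l t g : (l < t)%N -> (l < d j - 2)%N ->
  local j l (prefix j t g) = local j l g.
Proof.
move=> lt ld; apply/ffunP => c.
have [F0|c_supp] := eqVneq (calF (frow j l) c) 0; first by rewrite !ffunE F0 eqxx.
rewrite !local_supp //; case: c c_supp => [i|p] c_supp.
  move: c_supp; rewrite calF_inl_neq0 // => /andP[iS /eqP il].
  by rewrite !lift_inl ffunE iS il lt.
have [k [kd -> kl]] := calF_inr_neq0 ld c_supp.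
by rewrite !lift_fchi // chi_of_prefix //; move: kl => /orP[] /eqP; lia.
Qed.

Definition extends1 j t u g := (g == prefix j t.+1 g) && (prefix j t g == u).

Definition compatible j t u (y : {ffun FcolT s -> R}) :=
  (t == 0)%N || (y (fchi j t.-1) == chi_of j t.-1 u).

Definition glue j t u (y : {ffun FcolT s -> R}) : {ffun 'I_n -> R} :=
  [ffun i => if (i \in s j) && (eqn_of j i == t) then y (inl i) else u i].

Section Glue.
Variables (j : 'I_m) (t : nat) (u : {ffun 'I_n -> R}).
Hypothesis t_lt : (t < d j - 2)%N.
Hypothesis u_prefix : prefix j t u = u.

Let uE i : u i = if (i \in s j) && (eqn_of j i < t)%N then u i else 0.
Proof. by rewrite -{1}u_prefix ffunE. Qed.

Lemma glue_local g : extends1 j t u g -> glue j t u (local j t g) = g.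
Proof.
case/andP => /eqP g_next /eqP <-; apply/ffunP => i.
rewrite /glue [LHS]ffunE [in RHS]g_next [RHS]ffunE.
case iS: (i \in s j); rewrite ?andTb ?andFb; last by rewrite ffunE iS.
case: (eqn_of j i =P t) => [it|/eqP it].
  by rewrite local_inl ?it ?eqxx // ltnSn.
by rewrite ffunE iS andTb [in RHS]ltnS [in RHS]leq_eqVlt (negbTE it).
Qed.

Lemma compatible_local g : extends1 j t u g -> compatible j t u (local j t g).
Proof.
case/andP => _ /eqP <-; rewrite /compatible; case: (posnP t) => [->//|t0].
rewrite local_fchi ?chi_of_prefix ?eqxx ?orbT //; lia.
Qed.

Let glueE y i : glue j t u y i = if i \in s j then
  (if eqn_of j i == t then y (inl i) else if (eqn_of j i < t)%N then u i else 0) else 0.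
Proof. by rewrite ffunE {1}uE; case: (i \in s j) => //=. Qed.

Lemma extends1_glue y : extends1 j t u (glue j t u y).
Proof.
apply/andP; split; apply/eqP/ffunP => i.
  rewrite [RHS]ffunE glueE; case: (i \in s j) => //=.
  case: eqP => [->|_] /=; first by rewrite ltnSn.
  by case: ifP => [it|_]; rewrite ?if_same // ltnS ltnW.
rewrite [LHS]ffunE glueE [RHS]uE; case: (i \in s j) => //=.
by case: eqP => [->|_] /=; [rewrite ltnn | case: ifP => // ->].
Qed.

Lemma chi_of_glue_pred y : (0 < t)%N -> compatible j t u y ->
  chi_of j t.-1 (glue j t u y) = y (fchi j t.-1).
Proof.
move=> t0 /orP[/eqP t00|/eqP ->]; first by rewrite t00 in t0.
have /andP[_ /eqP glue_u] := extends1_glue y.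
by rewrite -[in RHS]glue_u chi_of_prefix //; lia.
Qed.

Lemma chi_of_glue y : Cset calF (frow j t) y -> compatible j t u y -> (t < d j - 3)%N ->
  chi_of j t (glue j t u y) = y (fchi j t).
Proof.
move=> /andP[_ /eqP y_row] y_comp td.
have g_row := sum_calF_lift (glue j t u y) t_lt.
rewrite ifF in g_row; last by apply/eqP; lia.
rewrite sum_calF_row // td lift_fchi // in g_row.
rewrite sum_calF_row // td in y_row.
have c_part : \sum_(i | (i \in s j) && (eqn_of j i == t)) lift (glue j t u y) (inl i) * H j i =
              \sum_(i | (i \in s j) && (eqn_of j i == t)) y (inl i) * H j i.
  by apply: eq_bigr => i /andP[iS it]; rewrite lift_inl ffunE iS it.
have chi_pred : (if (0 < t)%N then lift (glue j t u y) (fchi j t.-1) else 0) =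
                (if (0 < t)%N then y (fchi j t.-1) else 0).
  by case: ifP => // t0; rewrite lift_fchi ?chi_of_glue_pred //; lia.
rewrite c_part chi_pred in g_row.
by move: (etrans g_row (esym y_row)) => /addrI /addIr.
Qed.

Lemma local_glue y : Cset calF (frow j t) y -> compatible j t u y ->
  local j t (glue j t u y) = y.
Proof.
move=> Cy y_comp; apply/ffunP => c.
have [F0|c_supp] := eqVneq (calF (frow j t) c) 0.
  by rewrite ffunE F0 eqxx (Cset_supp Cy F0).
rewrite local_supp //; case: c c_supp => [i|p] c_supp.
  move: c_supp; rewrite calF_inl_neq0 // => /andP[iS it].
  by rewrite lift_inl ffunE iS it.
have [k [kd -> /orP[] /eqP kt]] := calF_inr_neq0 t_lt c_supp; rewrite lift_fchi //.
  by rewrite kt chi_of_glue // -kt.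
have -> : k = t.-1 by rewrite -kt.
by rewrite chi_of_glue_pred // -kt.
Qed.

Lemma sum_extends1 (phi : {ffun FcolT s -> R} -> K) :
  (forall y, ~~ Cset calF (frow j t) y -> phi y = 0) ->
  \sum_(g | extends1 j t u g) phi (local j t g) =
  \sum_(y | Cset calF (frow j t) y && compatible j t u y) phi y.
Proof.
move=> phi0; rewrite (partition_big (local j t) xpredT) // [RHS]big_mkcond.
apply: eq_bigr => y _.
have [Cy|nCy] := boolP (Cset calF (frow j t) y); last first.
  by apply: big1 => g /andP[_ /eqP gy]; rewrite phi0 // gy.
have [y_comp|ny_comp] := boolP (compatible j t u y); last first.
  by apply: big1 => g /andP[g_ext /eqP gy]; move: (compatible_local g_ext); rewrite gy (negbTE ny_comp).
rewrite (eq_bigl (pred1 (glue j t u y))) ?big_pred1_eq ?local_glue // => g /=.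
apply/andP/eqP => [[g_ext /eqP <-]|->]; first by rewrite glue_local.
by rewrite extends1_glue local_glue.
Qed.

End Glue.

Section Merge.
Variables (f : 'I_n -> Rm R -> K) (h : {j : 'I_m & 'I_(d j - 3)} -> Rm R -> K)
          (z : FrowT s -> {ffun FcolT s -> R} -> K).
Let F c := match c with inl i => f i | inr k => h k end.
Hypothesis zQ : inQ calF F z.

Lemma z_out rho y : ~~ Cset calF rho y -> z rho y = 0.
Proof. by case: zQ => z0 _ _ _; apply: z0. Qed.

Lemma z_ge0 rho y : 0 <= z rho y.
Proof.
case: zQ => z0 z_pos _ _.
by have [/z_pos|/z0 ->] := boolP (Cset calF rho y).
Qed.

Lemma sum_z rho : \sum_(y | Cset calF rho y) z rho y = 1.
Proof. by case: zQ. Qed.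

Definition marg rho c b := \sum_(y | Cset calF rho y && (y c == b)) z rho y.

Lemma marg_ge0 rho c b : 0 <= marg rho c b.
Proof. by apply: sumr_ge0 => y _; apply: z_ge0. Qed.

Lemma sum_marg rho c : \sum_b marg rho c b = 1.
Proof. by rewrite -(sum_z rho) (partition_big (fun y : {ffun FcolT s -> R} => y c) xpredT). Qed.

Lemma marg_F rho c b (b0 : b != 0) : calF rho c != 0 -> marg rho c b = F c (exist _ b b0).
Proof. by case: zQ => _ _ _ zF /(zF _ _ (exist _ b b0)). Qed.

Lemma marg_eq rho1 rho2 c b : calF rho1 c != 0 -> calF rho2 c != 0 ->
  marg rho1 c b = marg rho2 c b.
Proof.
move=> c1 c2; have [->|b0] := eqVneq b 0; last by rewrite !(marg_F b0).
have marg0 rho : marg rho c 0 = 1 - \sum_(b | b != 0) marg rho c b.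
  by rewrite -(sum_marg rho c) (bigD1 0) //= addrK.
by rewrite !marg0; congr (_ - _); apply: eq_bigr => b' b0; rewrite !(marg_F b0).
Qed.

Definition chi_marg j k b := marg (frow j k) (fchi j k) b.

Lemma chi_marg_next j k b : (k < d j - 3)%N ->
  marg (frow j k.+1) (fchi j k) b = chi_marg j k b.
Proof.
by move=> kd; apply: marg_eq; apply: calF_fchi_neq0; rewrite ?eqxx ?orbT //; lia.
Qed.

Definition norm j t g := if t is t'.+1 then chi_marg j t' (chi_of j t' g) else 1.

(* The glued law of the coordinates of [g] lying in the equations [< t] of check [j]:
   step [t + 1] draws equation [t] from [z] conditioned on the shared variable
   [chi^j_(t-1)], and [norm j t g] is the probability of that conditioning event. *)
Fixpoint glued j t g : K :=
  if t is t'.+1 then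
    if g == prefix j t g then
      glued j t' (prefix j t' g) * z (frow j t') (local j t' g) / norm j t' g
    else 0
  else if g == 0 then 1 else 0.

Lemma glued_ge0 j t g : 0 <= glued j t g.
Proof.
elim: t g => [|t IH] g /=; first by case: ifP.
case: ifP => // _; rewrite mulr_ge0 ?mulr_ge0 ?z_ge0 ?invr_ge0 //.
by case: t {IH} => [|t] /=; rewrite ?marg_ge0.
Qed.

Lemma glued_out j t g : g != prefix j t g -> glued j t g = 0.
Proof. by case: t => [|t] /=; rewrite ?prefix0 => /negbTE ->. Qed.

Lemma norm_prefix j t g : (t < d j - 2)%N -> norm j t (prefix j t g) = norm j t g.
Proof. by case: t => [|t] //= td; rewrite chi_of_prefix //; lia. Qed.

Lemma sum_compatible j t u : (t < d j - 2)%N ->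
  \sum_(y | Cset calF (frow j t) y && compatible j t u y) z (frow j t) y = norm j t u.
Proof.
case: t => [|t] td; last by rewrite /= -chi_marg_next //; lia.
by rewrite (eq_bigl (Cset calF (frow j 0))) ?sum_z // => y; rewrite /compatible andbT.
Qed.

Lemma sum_glued_succ j t (P : {ffun 'I_n -> R} -> {ffun FcolT s -> R} -> bool) :
  (t < d j - 2)%N ->
  \sum_(g | P (prefix j t g) (local j t g)) glued j t.+1 g =
  \sum_u glued j t u / norm j t u *
    \sum_(y | Cset calF (frow j t) y && compatible j t u y && P u y) z (frow j t) y.
Proof.
move=> td; rewrite (partition_big (prefix j t) xpredT) //; apply: eq_bigr => u _.
have [u_prefix|u_not_prefix] := eqVneq (prefix j t u) u; last first.
  rewrite glued_out ?mul0r 1?eq_sym // big1 // => g /andP[_ /eqP gu].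
  by case/eqP: u_not_prefix; rewrite -gu prefixK.
have glued_ext g : extends1 j t u g ->
    glued j t.+1 g = glued j t u / norm j t u * z (frow j t) (local j t g).
  case/andP => /eqP g_next /eqP gu; rewrite /= -g_next eqxx gu.
  by rewrite -norm_prefix // gu mulrAC.
rewrite (eq_bigl_supp (Q := fun g => extends1 j t u g && P u (local j t g))); last first.
  move=> g nz; have g_next : g == prefix j t.+1 g.
    by apply: contraNT nz => /glued_out ->.
  apply/idP/idP => /andP[].
    by move=> Pg gu; rewrite /extends1 g_next -(eqP gu) eqxx Pg.
  by case/andP=> _ /eqP <-; rewrite eqxx andbT.
rewrite (eq_bigr (fun g => glued j t u / norm j t u * z (frow j t) (local j t g)))
  => [|g /andP[g_ext _]]; last exact: glued_ext.
rewrite -big_distrr big_mkcondr /= (sum_extends1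
  (phi := fun y => if P u y then z (frow j t) y else 0) td u_prefix) -?big_mkcondr //.
by move=> y /z_out ->; rewrite if_same.
Qed.

Definition glued_marginals j t := forall l y, (l < t)%N ->
  \sum_(g | local j l g == y) glued j t g = z (frow j l) y.

Lemma glued_norm j t u : (t < d j - 2)%N -> glued_marginals j t ->
  glued j t u / norm j t u * norm j t u = glued j t u.
Proof.
move=> td marg_t; have [n0|n0] := eqVneq (norm j t u) 0; last by rewrite divfK.
rewrite n0 mulr0; apply/esym/eqP; rewrite eq_le glued_ge0 andbT -n0.
case: t td marg_t n0 => [|t] td marg_t n0; first by move/eqP: n0; rewrite /= oner_eq0.
apply: (le_trans (y := z (frow j t) (local j t u))).
  by rewrite -marg_t //; apply: ler_sum_term => // g _; exact: glued_ge0.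
apply: ler_sum_term => [|y _]; last exact: z_ge0.
by rewrite Cset_local_inner ?local_fchi ?eqxx //; lia.
Qed.

Lemma sum_glued_chi j t b : (t.+1 < d j - 2)%N -> glued_marginals j t.+1 ->
  \sum_(u | chi_of j t u == b) glued j t.+1 u = chi_marg j t b.
Proof.
move=> td marg_t.
rewrite (partition_big (local j t) (fun y => Cset calF (frow j t) y && (y (fchi j t) == b)))
  => [|u /eqP ub]; last by rewrite Cset_local_inner ?local_fchi ?ub ?eqxx //; lia.
apply: eq_bigr => y /andP[_ /eqP yb]; rewrite -marg_t //; apply: eq_bigl => u.
case: (local j t u =P y) => [uy|_]; last by rewrite andbF.
by rewrite -yb -uy local_fchi ?eqxx //; lia.
Qed.

Lemma glued_marg_prev j t l y0 : (t < d j - 2)%N -> glued_marginals j t -> (l < t)%N ->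
  \sum_(g | local j l g == y0) glued j t.+1 g = z (frow j l) y0.
Proof.
move=> td marg_t lt.
rewrite (eq_bigl (fun g => local j l (prefix j t g) == y0)) => [|g]; last first.
  by rewrite local_prefix //; lia.
rewrite (sum_glued_succ (fun u _ => local j l u == y0)) // -marg_t // [RHS]big_mkcond.
apply: eq_bigr => u _; case: (local j l u =P y0) => _; last first.
  by rewrite big_pred0 ?mulr0 // => y; rewrite andbF.
rewrite (eq_bigl (fun y => Cset calF (frow j t) y && compatible j t u y)) => [|y]; last first.
  by rewrite andbT.
by rewrite sum_compatible // glued_norm.
Qed.

Lemma glued_marg_last j t y0 : (t < d j - 2)%N -> glued_marginals j t ->
  \sum_(g | local j t g == y0) glued j t.+1 g = z (frow j t) y0.
Proof.
move=> td marg_t; rewrite (sum_glued_succ (fun _ y => y == y0)) //.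
have [Cy|nCy] := boolP (Cset calF (frow j t) y0); last first.
  rewrite z_out // big1 // => u _; rewrite big_pred0 ?mulr0 // => y.
  by case: eqP => [->|]; rewrite ?(negbTE nCy) ?andbF.
case: t td marg_t Cy => [|t] td marg_t Cy.
  rewrite (eq_bigr (fun u => glued j 0 u * z (frow j 0) y0)) => [|u _]; last first.
    by rewrite big_mkcondr big_if_eq Cy /= divr1.
  rewrite -big_distrl /= (bigD1 (0 : {ffun 'I_n -> R})) //= eqxx big1 ?addr0 ?mul1r // => g.
  by move/negbTE ->.
set b := y0 (fchi j t).
rewrite (eq_bigr (fun u => if chi_of j t u == b
    then z (frow j t.+1) y0 / chi_marg j t b * glued j t.+1 u else 0)) => [|u _]; last first.
  rewrite big_mkcondr big_if_eq Cy /compatible /= [b == _]eq_sym.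
  by case: (chi_of j t u =P b) => [->|_]; [ring | rewrite mulr0].
rewrite -big_mkcond -big_distrr /= sum_glued_chi //.
have [cm0|cm0] := eqVneq (chi_marg j t b) 0; last by rewrite divfK.
rewrite cm0 mulr0; apply/esym/eqP; rewrite eq_le z_ge0 andbT -cm0 -chi_marg_next; last lia.
by apply: ler_sum_term => [|y _]; [rewrite Cy eqxx | exact: z_ge0].
Qed.

Lemma glued_marginalsP j t : (t <= d j - 2)%N -> glued_marginals j t.
Proof.
elim: t => [_ l y|t IH tle l y]; first by rewrite ltn0.
rewrite ltnS leq_eqVlt => /orP[/eqP ->|lt].
  by apply: glued_marg_last; [lia | apply: IH; lia].
by apply: glued_marg_prev; [lia | apply: IH; lia | exact: lt].
Qed.

Lemma sum_glued j : \sum_g glued j (d j - 2) g = 1.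
Proof.
rewrite -(sum_z (frow j 0)) (partition_big (local j 0) (Cset calF (frow j 0))) => [|g _].
  by apply: eq_bigr => y _; apply: glued_marginalsP => //; have := d_ge4' j; lia.
by apply: Cset_local_inner; have := d_ge4' j; lia.
Qed.

Lemma glued_codeword j g : glued j (d j - 2) g != 0 -> Cset Hrow j g.
Proof.
have -> : (d j - 2 = (d j - 3).+1)%N by have := d_ge4' j; lia.
rewrite /=; case: ifP => [/eqP g_prefix nz|]; last by rewrite eqxx.
have Cg : Cset calF (frow j (d j - 3)) (local j (d j - 3) g).
  by apply: contraNT nz => /z_out ->; rewrite mulr0 mul0r.
rewrite Cset_local ?eqxx /= in Cg; last by have := d_ge4' j; lia.
apply/andP; split=> //; apply/forallP => i; apply/implyP => /eqP Hi.
by rewrite g_prefix ffunE s_supp Hi eqxx.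
Qed.

Lemma inQ_merge : exists w, inQ Hrow f w.
Proof.
have marg_glued j := glued_marginalsP (leqnn (d j - 2)).
exists (fun j g => if Cset Hrow j g then glued j (d j - 2) g else 0); split.
- by move=> j g /negbTE ->.
- by move=> j g ->; exact: glued_ge0.
- move=> j; rewrite (eq_bigr (glued j (d j - 2))) => [|g ->] //.
  rewrite big_cond_supp ?sum_glued // => g nCg; apply/eqP.
  by apply: contraNT nCg; exact: glued_codeword.
move=> j i [b b0] Hji; have iS : i \in s j by rewrite s_supp.
have lt := eqn_of_lt iS.
have c_supp : calF (frow j (eqn_of j i)) (inl i) != 0 by rewrite calF_inl_neq0 // iS eqxx.
have := marg_F b0 c_supp => /= <-.
rewrite (eq_bigr (glued j (d j - 2))) => [|g /andP[-> _]] //=.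
rewrite (partition_big (local j (eqn_of j i))
  (fun y => Cset calF (frow j (eqn_of j i)) y && (y (inl i) == b))) => [|g /andP[Cg /eqP gb]];
  last by rewrite Cset_local_codeword // local_inl ?gb ?eqxx.
apply: eq_bigr => y /andP[_ /eqP yb]; rewrite -(marg_glued _ _ _ lt).
apply: eq_bigl_supp => g /glued_codeword ->; rewrite andTb.
case: (local j _ g =P y) => [gy|_]; last by rewrite andbF.
by rewrite andbT -yb -gy local_inl ?eqxx.
Qed.

End Merge.

End Splitting.

Theorem theorem6 (R : finNzRingType) (K : realType) (m n : nat)
  (H : 'M[R]_(m, n)) (s : 'I_m -> seq 'I_n)
  (s_uniq : forall j, uniq (s j))
  (s_supp : forall j i, (i \in s j) = (H j i != 0))
  (d_ge4 : forall j, (4 <= size (s j))%N) :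
  let Qbar := fun f : 'I_n -> Rm R -> K =>
    exists w, inQ (fun j i => H j i) f w in
  let Sbar := fun f : 'I_n -> Rm R -> K =>
    exists (h : {j : 'I_m & 'I_(dj s j - 3)} -> Rm R -> K) z,
      inQ (@calF R m n H s)
        (fun c => match c with inl i => f i | inr k => h k end) z in
  (forall f, Sbar f <-> Qbar f) /\
  (forall (Lam : 'I_n -> Rm R -> K) (t : K),
     (exists f, Sbar f /\ \sum_i \sum_a Lam i a * f i a = t) <->
     (exists f, Qbar f /\ \sum_i \sum_a Lam i a * f i a = t)).
Proof.
move=> Qbar Sbar.
have SQ f : Sbar f <-> Qbar f.
  split=> [[h [z zQ]] | [w wQ]]; first exact: (inQ_merge s_supp d_ge4 zQ).
  exact: (inQ_split s_supp d_ge4 wQ).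
by split=> // Lam t; split=> -[f [/SQ Hf e]]; exists f.
Qed.
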